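(* Let $S=\langle T,\Pi,C\rangle$ be a state space and let $(A_i,\psi_i)$, $1\le i\le k$, be abstractions of $S$ forming an additive abstraction system. Then $h_{add}(t^1,g)\le OPT(t^1,t^2)+h_{add}(t^2,g)$ for all $t^1,t^2,g\in T$.
   Context: A state space is a weighted directed graph $S=\langle T,\Pi,C\rangle$ where $T$ is a finite set of states, $\Pi\subseteq T\times T$ is a set of directed edges, and $C:\Pi\to\mathbb{N}=\{0,1,2,\dots\}$. A path from $u$ to $v$ is a sequence of edges $\langle\pi^1,\dots,\pi^n\rangle$ with $\pi^j=(u^{j-1},u^j)\in\Pi$, $u^0=u$, $u^n=v$; its cost is $C(\pi)=\sum_j C(\pi^j)$. $OPT(u,v)$ is the minimum cost of a path from $u$ to $v$ in $S$ (minima over empty sets are $+\infty$). An abstract state space is $A_i=\langle T_i,\Pi_i,C_i,R_i\rangle$ with $T_i$ a set of abstract states, $\Pi_i\subseteq T_i\times T_i$, and edge weights $C_i,R_i:\Pi_i\to\mathbb{N}$ (primary and residual cost), extended additively to paths. An abstraction of $S$ is a pair $(A_i,\psi_i)$ with $\psi_i:T\to T_i$ such that (1) for every $(u,v)\in\Pi$, $(\psi_i(u),\psi_i(v))\in\Pi_i$, and (2) for every $\pi=(u,v)\in\Pi$, $C_i(\pi_i)+R_i(\pi_i)\le C(\pi)$ where $\pi_i=(\psi_i(u),\psi_i(v))$. The system is additive if for every $\pi\in\Pi$, $\sum_{i=1}^k C_i(\pi_i)\le C(\pi)$. Define $C^*_i(x,y)=\min\{C_i(\rho):\rho\text{ a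 path from }x\text{ to }y\text{ in }A_i\}$ and $h_{add}(t,g)=\sum_{i=1}^k C^*_i(\psi_i(t),\psi_i(g))$. *)

From Stdlib Require Import ClassicalEpsilon.
From mathcomp Require Import all_boot.
Set Implicit Arguments. Unset Strict Implicit. Unset Printing Implicit Defensive.

(* Extended naturals N ∪ {+oo}: Some n = n, None = +oo. *)
Definition enat := option nat.

Definition eadd (x y : enat) : enat :=
  match x, y with Some a, Some b => Some (a + b) | _, _ => None end.

Definition ele (x y : enat) : Prop :=
  match x, y with
  | _, None => True
  | None, Some _ => False
  | Some a, Some b => a <= b
  end.

Definition nat_inf (P : nat -> Prop) : enat :=
  match excluded_middle_informative (exists n, P n) with
  | left _ => Some (epsilon (inhabits 0%N) (fun m => P m /\ forall n, P n -> m <= n))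
  | right _ => None
  end.

(* A path given by its sequence of visited states after the start u:
   u = u^0, u^1, ..., u^n; each (u^{j-1}, u^j) must be an edge. *)
Fixpoint walk {X : Type} (E : X -> X -> Prop) (u : X) (s : seq X) : Prop :=
  match s with [::] => True | x :: s' => E u x /\ walk E x s' end.

Fixpoint wcost {X : Type} (c : X -> X -> nat) (u : X) (s : seq X) : nat :=
  match s with [::] => 0 | x :: s' => c u x + wcost c x s' end.

Definition is_path {X : Type} (E : X -> X -> Prop) (u v : X) (s : seq X) : Prop :=
  walk E u s /\ last u s = v.

Definition min_cost {X : Type} (E : X -> X -> Prop) (c : X -> X -> nat) (u v : X) : enat :=
  nat_inf (fun n => exists s, is_path E u v s /\ wcost c u s = n).

Definition OPT {T : Type} (Pi : T -> T -> Prop) (C : T -> T -> nat) (u v : T) : enat :=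
  min_cost Pi C u v.

Definition is_abstraction {T Ti : Type} (Pi : T -> T -> Prop) (C : T -> T -> nat)
  (Pii : Ti -> Ti -> Prop) (Ci Ri : Ti -> Ti -> nat) (psi : T -> Ti) : Prop :=
  (forall u v, Pi u v -> Pii (psi u) (psi v)) /\
  (forall u v, Pi u v -> Ci (psi u) (psi v) + Ri (psi u) (psi v) <= C u v).

Definition is_additive {T : Type} (k : nat) (Ti : 'I_k -> Type)
  (Pi : T -> T -> Prop) (C : T -> T -> nat)
  (Ci : forall i, Ti i -> Ti i -> nat) (psi : forall i, T -> Ti i) : Prop :=
  forall u v, Pi u v -> \sum_(i < k) Ci i (psi i u) (psi i v) <= C u v.

Definition h_add {T : Type} (k : nat) (Ti : 'I_k -> Type)
  (Pii : forall i, Ti i -> Ti i -> Prop) (Ci : forall i, Ti i -> Ti i -> nat)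
  (psi : forall i, T -> Ti i) (t g : T) : enat :=
  \big[eadd/Some 0%N]_(i < k) min_cost (Pii i) (Ci i) (psi i t) (psi i g).

(* Project an optimal path from t1 to t2 into each abstraction A_i and append an
   optimal abstract path from psi_i t2 to psi_i g: this gives an abstract path
   from psi_i t1 to psi_i g, so C*_i(psi_i t1, psi_i g) is at most the projected
   cost plus C*_i(psi_i t2, psi_i g).  Summing over i, additivity bounds the
   total projected cost by the cost of the optimal path, i.e. by OPT(t1, t2). *)

From Stdlib Require Import ClassicalEpsilon.
From mathcomp Require Import all_boot.
From mathcomp Require Import zify.

Set Implicit Arguments.
Unset Strict Implicit.
Unset Printing Implicit Defensive.

Lemma ex_least_nat (P : nat -> Prop) n :
  P n -> exists m, P m /\ forall n, P n -> m <= n.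
Proof.
move=> Pn.
pose pb x := if excluded_middle_informative (P x) then true else false.
have pbP x : reflect (P x) (pb x).
  by rewrite /pb; case: excluded_middle_informative => ?; constructor.
have [m /pbP Pm m_min] := ex_minnP (ex_intro _ n (introT (pbP n) Pn)).
by exists m; split=> // x /pbP; apply: m_min.
Qed.

Lemma nat_inf_spec (P : nat -> Prop) m :
  nat_inf P = Some m -> P m /\ forall n, P n -> m <= n.
Proof.
rewrite /nat_inf; case: excluded_middle_informative => [ex_P|] // [<-].
have [n Pn] := ex_P.
exact: (epsilon_spec (inhabits 0) (fun m => P m /\ forall n, P n -> m <= n)
  (ex_least_nat Pn)).
Qed.

Lemma nat_inf_le (P : nat -> Prop) n : P n -> ele (nat_inf P) (Some n).
Proof.
move=> Pn; case E: (nat_inf P) => [m|] /=; first exact: (nat_inf_spec E).2.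
move: E; rewrite /nat_inf; case: excluded_middle_informative => // [[]].
by exists n.
Qed.

Lemma ele_add_big (I : Type) (r : seq I) (x y : I -> enat) (w : I -> nat) :
  (forall i, ele (x i) (eadd (Some (w i)) (y i))) ->
  ele (\big[eadd/Some 0]_(i <- r) x i)
      (eadd (Some (\sum_(i <- r) w i)) (\big[eadd/Some 0]_(i <- r) y i)).
Proof.
move=> le_xwy.
apply: (big_ind3 (fun x w y => ele x (eadd (Some w) y))) => //=.
move=> [a1|] w1 [b1|] [a2|] w2 [b2|] //=; lia.
Qed.

Lemma ele_add_leq x y a b :
  ele x (eadd (Some a) y) -> a <= b -> ele x (eadd (Some b) y).
Proof. by case: x => [c|]; case: y => [d|] //=; lia. Qed.

Section Paths.

Variable X : Type.

Lemma wcost_cat (c : X -> X -> nat) u s1 s2 :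
  wcost c u (s1 ++ s2) = wcost c u s1 + wcost c (last u s1) s2.
Proof. by elim: s1 u => //= x s IH u; rewrite IH addnA. Qed.

Lemma is_path_cat (E : X -> X -> Prop) u v w s1 s2 :
  is_path E u v s1 -> is_path E v w s2 -> is_path E u w (s1 ++ s2).
Proof.
move=> [walk1 <-] [walk2 <-]; split; last by rewrite last_cat.
elim: s1 u walk1 walk2 => //= x s IH u [Eux walk_s] walk2.
by split=> //; apply: IH.
Qed.

Lemma is_path_map (Y : Type) (E : X -> X -> Prop) (F : Y -> Y -> Prop)
    (f : X -> Y) u v s :
  (forall a b, E a b -> F (f a) (f b)) ->
  is_path E u v s -> is_path F (f u) (f v) (map f s).
Proof.
move=> homEF [walk_s <-]; split; last by rewrite last_map.
by elim: s u walk_s => //= x s IH u [Eux walk_s]; split; [apply: homEF | apply: IH].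
Qed.

Lemma min_cost_le_path (E : X -> X -> Prop) (c : X -> X -> nat) u v w s :
  is_path E u v s ->
  ele (min_cost E c u w) (eadd (Some (wcost c u s)) (min_cost E c v w)).
Proof.
move=> path_s; rewrite {2}/min_cost.
case opt_vw: (nat_inf _) => [m|]; last by case: (min_cost _ _ _ _).
have [[s' [path_s' <-]] _] := nat_inf_spec opt_vw.
rewrite /= -(proj2 path_s) -wcost_cat.
by apply: nat_inf_le; exists (s ++ s'); split=> //; apply: is_path_cat path_s'.
Qed.

Lemma sum_wcost_map_le (k : nat) (Y : 'I_k -> Type) (E : X -> X -> Prop)
    (C : X -> X -> nat) (c : forall i, Y i -> Y i -> nat) (f : forall i, X -> Y i) u s :
  (forall a b, E a b -> \sum_(i < k) c i (f i a) (f i b) <= C a b) ->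
  walk E u s -> \sum_(i < k) wcost (c i) (f i u) (map (f i) s) <= wcost C u s.
Proof.
move=> additive; elim: s u => [|x s IH] u /=; first by rewrite big1.
by move=> [Eux walk_s]; rewrite big_split leq_add // ?additive ?IH.
Qed.

End Paths.

Theorem lemma5 (T : finType) (Pi : T -> T -> Prop) (C : T -> T -> nat)
  (k : nat) (Ti : 'I_k -> Type)
  (Pii : forall i, Ti i -> Ti i -> Prop) (Ci Ri : forall i, Ti i -> Ti i -> nat)
  (psi : forall i, T -> Ti i)
  (habs : forall i, is_abstraction Pi C (Pii i) (Ci i) (Ri i) (psi i))
  (hadd : is_additive Pi C Ci psi) :
  forall t1 t2 g : T,
    ele (h_add Pii Ci psi t1 g) (eadd (OPT Pi C t1 t2) (h_add Pii Ci psi t2 g)).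
Proof.
move=> t1 t2 g; rewrite /OPT /min_cost.
case opt_12: (nat_inf _) => [o|]; last by case: (h_add _ _ _ _ _).
have [[s [path_s <-]] _] := nat_inf_spec opt_12.
have abstract_path i : is_path (Pii i) (psi i t1) (psi i t2) (map (psi i) s).
  exact: is_path_map (proj1 (habs i)) path_s.
have sum_le : \sum_(i < k) wcost (Ci i) (psi i t1) (map (psi i) s) <= wcost C t1 s.
  exact: sum_wcost_map_le hadd (proj1 path_s).
apply: ele_add_leq sum_le.
exact: ele_add_big (fun i => min_cost_le_path (Ci i) (psi i g) (abstract_path i)).
Qed.
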